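(* The monoid $\Pi_2=\langle a,b,c\mid (ab^ic)^2=1\ (i\geq 1)\rangle$ has context-free word problem.
   Context: For a monoid $M$ with finite generating set $A$, the word problem of $M$ with respect to $A$ is the language $\{u\#v^{\mathrm{rev}} \mid u,v\in A^\ast,\ u=_M v\}$, where $\#\notin A$ and $v^{\mathrm{rev}}$ is the reversal of $v$. $M$ has context-free word problem if this language is context-free (this is independent of the finite generating set). *)

From HB Require Import structures.
From mathcomp Require Import all_boot.
Set Implicit Arguments. Unset Strict Implicit. Unset Printing Implicit Defensive.

Record cfg (T : eqType) := CFG {
  cfg_N : finType;
  cfg_start : cfg_N;
  cfg_prods : seq (cfg_N * seq (T + cfg_N))
}.

Unset Implicit Arguments.
Inductive derives (T : eqType) (G : cfg T) : seq (T + cfg_N G) -> seq T -> Prop :=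
| der_nil : derives T G [::] [::]
| der_term (t : T) s w : derives T G s w -> derives T G (inl t :: s) (t :: w)
| der_nonterm (X : cfg_N G) rhs s w :
    (X, rhs) \in cfg_prods G -> derives T G (rhs ++ s) w ->
    derives T G (inr X :: s) w.
Arguments derives {T} G _ _.
Set Implicit Arguments.

Definition cfg_lang (T : eqType) (G : cfg T) (w : seq T) : Prop :=
  derives G [:: inr (cfg_start G)] w.

Definition context_free (T : eqType) (L : seq T -> Prop) : Prop :=
  exists G : cfg T, forall w, cfg_lang G w <-> L w.

Inductive pres_eq (A : Type) (R : seq A -> seq A -> Prop) : seq A -> seq A -> Prop :=
| pres_refl u : pres_eq R u u
| pres_sym u v : pres_eq R u v -> pres_eq R v u
| pres_trans u v w : pres_eq R u v -> pres_eq R v w -> pres_eq R u w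
| pres_step u l r v : R l r -> pres_eq R (u ++ l ++ v) (u ++ r ++ v).

(* Word problem of the monoid <A | R> w.r.t. the generating set A, as a
   language over [option A], where [None] plays the role of [#]. *)
Definition word_problem (A : eqType) (R : seq A -> seq A -> Prop)
  (w : seq (option A)) : Prop :=
  exists u v : seq A,
    w = map Some u ++ None :: map Some (rev v) /\ pres_eq R u v.

Inductive gen3 := ga | gb | gc.

Definition gen3_eqb (x y : gen3) : bool :=
  match x, y with ga, ga | gb, gb | gc, gc => true | _, _ => false end.
Lemma gen3_eqP : Equality.axiom gen3_eqb.
Proof. by case; case; constructor. Qed.
HB.instance Definition _ := hasDecEq.Build gen3 gen3_eqP.

Definition abic (i : nat) : seq gen3 := ga :: nseq i gb ++ [:: gc].

Inductive Pi2_rel : seq gen3 -> seq gen3 -> Prop :=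
| Pi2_r (i : nat) : 1 <= i -> Pi2_rel (abic i ++ abic i) [::].

From HB Require Import structures.
From mathcomp Require Import all_boot.
Set Implicit Arguments. Unset Strict Implicit. Unset Printing Implicit Defensive.

(* The monoid Pi_2 = < a, b, c | (a b^i c)^2 = 1 (i >= 1) > has a
   context-free word problem, witnessed by the grammar
     S -> D x S x R (x = a, b, c) | D # R
     D -> eps | D D | a D K D c         K -> b D c D a D b | b D K D b
   where R and Q generate the reversals of the D- and K-words.
   Soundness: D derives words equal to 1 and K words equal to b^i c a b^i
   (i >= 1); this is checked production by production through a generic
   soundness principle for grammars with a semantics of nonterminals.
   Completeness: pushing the letters of a word onto a stack and cancelling
   each (a b^i c)^2 as soon as it appears computes a normal form [nf]
   invariant under the defining congruence, and every word is its normal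
   form padded with D-words.  So equal words u, v pad a common skeleton,
   and S derives u # rev v by generating the skeleton letters in pairs. *)

Section Presentation.
Variables (A : Type) (R : seq A -> seq A -> Prop).
Local Notation eqR := (pres_eq R).

Lemma pres_eq_ctx p q u v : eqR u v -> eqR (p ++ u ++ q) (p ++ v ++ q).
Proof.
elim=> {u v} [u|u v _ IH|u v w _ IH1 _ IH2|u l r v Hlr].
- exact: pres_refl.
- exact: pres_sym.
- exact: pres_trans IH1 IH2.
- have E m : p ++ (u ++ m ++ v) ++ q = (p ++ u) ++ m ++ (v ++ q).
    by rewrite !catA.
  by rewrite !E; apply: pres_step.
Qed.

Lemma pres_eq_cat u1 v1 u2 v2 : eqR u1 v1 -> eqR u2 v2 -> eqR (u1 ++ u2) (v1 ++ v2).
Proof.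
move=> H1 H2; apply: (@pres_trans _ _ _ (v1 ++ u2)).
- by have := pres_eq_ctx [::] u2 H1; rewrite /=.
- by have := pres_eq_ctx v1 [::] H2; rewrite !cats0.
Qed.

Lemma pres_eq_rel l r : R l r -> eqR l r.
Proof. by move=> Hlr; have := pres_step [::] [::] Hlr; rewrite /= !cats0. Qed.

Lemma pres_eq_trivial u v : eqR u [::] -> eqR v [::] -> eqR u v.
Proof. by move=> Hu Hv; apply: pres_trans Hu (pres_sym Hv). Qed.

End Presentation.

Section Derivations.
Variables (T : eqType) (G : cfg T).
Local Notation form := (seq (T + cfg_N G)).

Lemma derives_cons_t t s w : derives G s w -> derives G (inl t :: s) (t :: w).
Proof. exact: der_term. Qed.

Lemma derives_cat s1 s2 w1 w2 :
  derives G s1 w1 -> derives G s2 w2 -> derives G (s1 ++ s2) (w1 ++ w2).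
Proof.
move=> H1 H2; elim: H1 => //= [t s w _ IH|X rhs s w Hp _ IH].
- exact: der_term.
- by apply: (der_nonterm _ _ _ _ _ _ Hp); rewrite catA.
Qed.

Lemma derives_cons_nt X s w1 w2 :
  derives G [:: inr X] w1 -> derives G s w2 -> derives G (inr X :: s) (w1 ++ w2).
Proof. exact: (@derives_cat [:: inr X] s). Qed.

Lemma derives_prod X rhs w :
  (X, rhs) \in cfg_prods G -> derives G rhs w -> derives G [:: inr X] w.
Proof. by move=> Hp H; apply: (der_nonterm _ _ _ _ _ _ Hp); rewrite cats0. Qed.

Variable sem : cfg_N G -> seq T -> Prop.

Fixpoint sem_form (s : form) (w : seq T) : Prop :=
  match s with
  | [::] => w = [::]
  | inl t :: s' => exists2 w', w = t :: w' & sem_form s' w'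
  | inr X :: s' => exists w1 w2, [/\ w = w1 ++ w2, sem X w1 & sem_form s' w2]
  end.

Lemma sem_form_cat_inv s1 s2 w : sem_form (s1 ++ s2) w ->
  exists w1 w2, [/\ w = w1 ++ w2, sem_form s1 w1 & sem_form s2 w2].
Proof.
elim: s1 w => [|[t|X] s1 IH] w /=.
- by move=> H; exists [::], w.
- case=> w' -> /IH [w1 [w2 [-> H1 H2]]].
  by exists (t :: w1), w2; split => //; exists w1.
- case=> w0 [w' [-> HX /IH [w1 [w2 [-> H1 H2]]]]].
  by exists (w0 ++ w1), w2; split; [rewrite catA | exists w0, w1 | ].
Qed.

Hypothesis prods_sound :
  forall X rhs w, (X, rhs) \in cfg_prods G -> sem_form rhs w -> sem X w.

Lemma derives_sound s w : derives G s w -> sem_form s w.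
Proof.
elim=> [|t s0 w0 _ IH|X rhs s0 w0 Hp _ IH] //=; first by exists w0.
case: (sem_form_cat_inv IH) => w1 [w2 [-> H1 H2]].
by exists w1, w2; split => //; apply: prods_sound Hp H1.
Qed.

Lemma cfg_lang_sound w : cfg_lang G w -> sem (cfg_start G) w.
Proof. by case/derives_sound => w1 [w2 [-> H ->]]; rewrite cats0. Qed.

End Derivations.

Local Notation eqPi := (pres_eq Pi2_rel).

Lemma eqPi_relator i : 0 < i -> eqPi (abic i ++ abic i) [::].
Proof. by move=> Hi; apply/pres_eq_rel/Pi2_r. Qed.

(* The middle part b^i c a b^i of the relator (a b^i c)^2. *)
Definition bca i := nseq i gb ++ gc :: ga :: nseq i gb.

Lemma nseq_rcons (T : Type) (x : T) i : nseq i.+1 x = rcons (nseq i x) x.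
Proof. by elim: i => //= i ->. Qed.

Lemma relator_bca i : ga :: bca i ++ [:: gc] = abic i ++ abic i.
Proof. by rewrite /bca /abic /= -!catA. Qed.

Lemma bca_succ i : gb :: bca i ++ [:: gb] = bca i.+1.
Proof. by rewrite /bca /= -catA /= cats1 -nseq_rcons. Qed.

(** The stack holds the
    reduced prefix read so far in reverse order; after pushing a letter,
    a relator (a b^i c)^2 on top of the stack (that is, the reversed word
    c b^i a c b^i a) is removed. *)

Definition redex i (r : seq gen3) := gc :: nseq i gb ++ ga :: gc :: nseq i gb ++ ga :: r.

Fixpoint lead_b (t : seq gen3) : nat := if t is gb :: t' then (lead_b t').+1 else 0.

(* [pop_redex s = Some r] iff [s = redex i r] for some i >= 1. *)
Definition pop_redex (s : seq gen3) : option (seq gen3) :=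
  if s is gc :: t then
    let j := lead_b t in
    if 0 < j then
      if drop j t is ga :: gc :: t2 then
        if lead_b t2 == j then (if drop j t2 is ga :: r then Some r else None)
        else None
      else None
    else None
  else None.

Definition push (s : seq gen3) (x : gen3) : seq gen3 :=
  if pop_redex (x :: s) is Some r then r else x :: s.

Definition nf (u : seq gen3) : seq gen3 := foldl push [::] u.

Lemma lead_b_split t : t = nseq (lead_b t) gb ++ drop (lead_b t) t.
Proof. by elim: t => //= -[] t IH //=; rewrite -IH. Qed.

Lemma lead_b_nseq i s : lead_b (nseq i gb ++ ga :: s) = i.
Proof. by elim: i => //= i ->. Qed.

Lemma drop_nseq_cat i (s : seq gen3) : drop i (nseq i gb ++ s) = s.
Proof. by elim: i => [|i IH] /=; rewrite ?drop0. Qed.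

Lemma nseq_ga_inj i j (s t : seq gen3) :
  nseq i gb ++ ga :: s = nseq j gb ++ ga :: t -> i = j /\ s = t.
Proof. by elim: i j => [|i IH] [|j] //= [] // /IH [-> ->]. Qed.

Lemma pop_redexE i r : 0 < i -> pop_redex (redex i r) = Some r.
Proof. by move=> Hi; rewrite /= lead_b_nseq Hi drop_nseq_cat lead_b_nseq eqxx drop_nseq_cat. Qed.

Lemma pop_redexP s r : pop_redex s = Some r -> exists2 i, 0 < i & s = redex i r.
Proof.
case: s => // -[] // t /=; case: ifP => // Hj.
have Et := lead_b_split t.
case Ed: (drop (lead_b t) t) => [|[] [|[] t2]] //; case: eqP => // Hn.
have Et2 := lead_b_split t2; rewrite Hn in Et2.
case Ed2: (drop (lead_b t) t2) => [|[] r'] // [<-].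
by exists (lead_b t) => //; rewrite /redex {1}Et Ed {1}Et2 Ed2.
Qed.

(* Stacks without any redex inside; these are the only stacks reached. *)
Definition reduced (s : seq gen3) := forall k, pop_redex (drop k s) = None.

Lemma reduced_push s x : reduced s -> reduced (push s x).
Proof.
move=> Hs; rewrite /push; case E: (pop_redex (x :: s)) => [r|]; last by case.
case: (pop_redexP E) => i _ [_ Es] k.
pose p := nseq i gb ++ ga :: gc :: nseq i gb ++ [:: ga].
have Es' : s = p ++ r by rewrite Es /p -catA /= -catA.
by have := Hs (k + size p); rewrite Es' drop_cat ltnNge leq_addl /= addnK.
Qed.

Lemma reduced_foldl s u : reduced s -> reduced (foldl push s u).
Proof. by elim: u s => //= x u IH s Hs; apply/IH/reduced_push. Qed.

Lemma push_nseq_b i s : foldl push s (nseq i gb) = nseq i gb ++ s.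
Proof.
elim: i => // i IH; rewrite nseq_rcons foldl_rcons IH.
by rewrite /push /= -nseq_rcons.
Qed.

Lemma push_abic i s : foldl push s (abic i) = push (nseq i gb ++ ga :: s) gc.
Proof. by rewrite /abic /= foldl_cat push_nseq_b. Qed.

(* Pushing a relator onto a reduced stack leaves it unchanged: the first
   copy of a b^i c cannot complete a redex with the (reduced) stack, so
   the second copy completes exactly the relator. *)
Lemma push_relator i s : 0 < i -> reduced s -> foldl push s (abic i ++ abic i) = s.
Proof.
move=> Hi Hs; rewrite foldl_cat !push_abic {2}/push.
case E: (pop_redex (gc :: _)) => [r|]; rewrite /push.
- case: (pop_redexP E) => j _ [/nseq_ga_inj [<- Es]].
  case E2: (pop_redex _) => [r'|]; last by rewrite Es.
  case: (pop_redexP E2) => j' _ [/nseq_ga_inj [<- Er]].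
  by have := Hs 0; rewrite drop0 Es Er -/(redex i r') pop_redexE.
- by rewrite -/(redex i s) pop_redexE.
Qed.

Lemma nf_eqPi u v : eqPi u v -> nf u = nf v.
Proof.
elim=> {u v} [//|u v _ -> //|u v w _ -> _ -> //|u l r v [i Hi]].
rewrite /nf foldl_cat [in LHS]foldl_cat push_relator ?foldl_cat //.
exact: reduced_foldl.
Qed.

(* S derives u # rev v with u = v; D derives words equal to 1 and R their
   reversals; K derives words equal to some bca i (i >= 1) and Q their
   reversals. *)
Inductive nt := ntS | ntD | ntK | ntR | ntQ.

Definition nt_code (X : nt) : nat :=
  match X with ntS => 0 | ntD => 1 | ntK => 2 | ntR => 3 | ntQ => 4 end.
Definition nt_decode (n : nat) : option nt :=
  nth None [:: Some ntS; Some ntD; Some ntK; Some ntR; Some ntQ] n.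
Lemma nt_codeK : pcancel nt_code nt_decode. Proof. by case. Qed.
HB.instance Definition _ := Countable.copy nt (pcan_type nt_codeK).
Lemma nt_enumP : Finite.axiom [:: ntS; ntD; ntK; ntR; ntQ]. Proof. by case. Qed.
HB.instance Definition _ := isFinite.Build nt nt_enumP.

Definition sym := (option gen3 + nt)%type.
Definition tm (x : gen3) : sym := inl (Some x).
Local Notation hash := (inl None : sym).
Local Notation S := (inr ntS : sym).
Local Notation D := (inr ntD : sym).
Local Notation K := (inr ntK : sym).
Local Notation R := (inr ntR : sym).
Local Notation Q := (inr ntQ : sym).

Definition prods : seq (nt * seq sym) := [::
 (ntS, [:: D; tm ga; S; tm ga; R]);
 (ntS, [:: D; tm gb; S; tm gb; R]);
 (ntS, [:: D; tm gc; S; tm gc; R]);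
 (ntS, [:: D; hash; R]);
 (ntD, [::]); (ntD, [:: D; D]); (ntD, [:: tm ga; D; K; D; tm gc]);
 (ntK, [:: tm gb; D; tm gc; D; tm ga; D; tm gb]);
 (ntK, [:: tm gb; D; K; D; tm gb]);
 (ntR, [::]); (ntR, [:: R; R]); (ntR, [:: tm gc; R; Q; R; tm ga]);
 (ntQ, [:: tm gb; R; tm ga; R; tm gc; R; tm gb]);
 (ntQ, [:: tm gb; R; Q; R; tm gb]) ].

Definition Pi2_grammar : cfg (option gen3) := @CFG _ nt ntS prods.

Definition semD (w : seq (option gen3)) := exists e, w = map Some e /\ eqPi e [::].
Definition semR (w : seq (option gen3)) := exists e, w = map Some (rev e) /\ eqPi e [::].
Definition semK (w : seq (option gen3)) :=
  exists k i, [/\ 0 < i, w = map Some k & eqPi k (bca i)].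
Definition semQ (w : seq (option gen3)) :=
  exists k i, [/\ 0 < i, w = map Some (rev k) & eqPi k (bca i)].

Definition sem (X : nt) : seq (option gen3) -> Prop :=
  match X with
  | ntS => word_problem Pi2_rel
  | ntD => semD | ntK => semK | ntR => semR | ntQ => semQ
  end.

Lemma eqPi_cons x u v : eqPi u v -> eqPi (x :: u) (x :: v).
Proof. exact: (pres_eq_cat (pres_refl _ [:: x])). Qed.

Lemma eqPi_rcons x u v : eqPi u v -> eqPi (u ++ [:: x]) (v ++ [:: x]).
Proof. by move/pres_eq_cat; apply; apply: pres_refl. Qed.

Lemma sound_S x w1 w2 w3 : semD w1 -> word_problem Pi2_rel w2 -> semR w3 ->
  word_problem Pi2_rel (w1 ++ Some x :: w2 ++ Some x :: w3).
Proof.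
move=> [e [-> He]] [u [v [-> Huv]]] [f [-> Hf]].
exists (e ++ x :: u), (f ++ x :: v); split.
- by rewrite rev_cat rev_cons -cats1 !map_cat /= -!catA.
- exact: pres_eq_cat (pres_eq_trivial He Hf) (eqPi_cons x Huv).
Qed.

Lemma sound_S_hash w1 w2 : semD w1 -> semR w2 -> word_problem Pi2_rel (w1 ++ None :: w2).
Proof. by move=> [e [-> He]] [f [-> Hf]]; exists e, f; split; last exact: pres_eq_trivial. Qed.

Lemma sound_D_nil : semD [::].
Proof. by exists [::]; split => //; apply: pres_refl. Qed.

Lemma sound_DD w1 w2 : semD w1 -> semD w2 -> semD (w1 ++ w2).
Proof.
move=> [e1 [-> H1]] [e2 [-> H2]].
by exists (e1 ++ e2); rewrite map_cat; split => //; apply: pres_eq_cat H1 H2.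
Qed.

Lemma sound_D_relator w1 w2 w3 : semD w1 -> semK w2 -> semD w3 ->
  semD (Some ga :: w1 ++ w2 ++ w3 ++ [:: Some gc]).
Proof.
move=> [e1 [-> H1]] [k [i [Hi -> Hk]]] [e2 [-> H2]].
exists (ga :: e1 ++ k ++ e2 ++ [:: gc]); split; first by rewrite /= !map_cat.
apply: pres_trans (eqPi_relator Hi); rewrite -relator_bca catA catA.
apply/eqPi_cons/eqPi_rcons; rewrite -[bca i]cat0s -[_ ++ bca i]cats0.
exact: pres_eq_cat (pres_eq_cat H1 Hk) H2.
Qed.

Lemma sound_K_base w1 w2 w3 : semD w1 -> semD w2 -> semD w3 ->
  semK (Some gb :: w1 ++ Some gc :: w2 ++ Some ga :: w3 ++ [:: Some gb]).
Proof.
move=> [e1 [-> H1]] [e2 [-> H2]] [e3 [-> H3]].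
exists (gb :: e1 ++ gc :: e2 ++ ga :: e3 ++ [:: gb]), 1; split => //.
  by rewrite /= !(map_cat, map_cons).
have -> : bca 1 = gb :: [::] ++ gc :: [::] ++ ga :: [::] ++ [:: gb] by [].
apply/eqPi_cons.
exact: pres_eq_cat H1 (eqPi_cons gc (pres_eq_cat H2 (eqPi_cons ga (eqPi_rcons gb H3)))).
Qed.

Lemma sound_K_step w1 w2 w3 : semD w1 -> semK w2 -> semD w3 ->
  semK (Some gb :: w1 ++ w2 ++ w3 ++ [:: Some gb]).
Proof.
move=> [e1 [-> H1]] [k [i [Hi -> Hk]]] [e2 [-> H2]].
exists (gb :: e1 ++ k ++ e2 ++ [:: gb]), i.+1; split => //; first by rewrite /= !map_cat.
rewrite -bca_succ catA catA; apply/eqPi_cons/eqPi_rcons.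
rewrite -[bca i]cat0s -[_ ++ bca i]cats0.
exact: pres_eq_cat (pres_eq_cat H1 Hk) H2.
Qed.

(* The R- and Q-productions mirror the D- and K-productions under reversal. *)
Lemma semR_rev w : semR w <-> semD (rev w).
Proof.
split=> -[e [Ew He]]; exists e; split => //; first by rewrite Ew map_rev revK.
by rewrite -[w]revK Ew map_rev.
Qed.

Lemma semQ_rev w : semQ w <-> semK (rev w).
Proof.
split=> -[k [i [Hi Ew Hk]]]; exists k, i; split => //; first by rewrite Ew map_rev revK.
by rewrite -[w]revK Ew map_rev.
Qed.

Lemma rev_frame (T : Type) (x y : T) u v w :
  rev (x :: u ++ v ++ w ++ [:: y]) = y :: rev w ++ rev v ++ rev u ++ [:: x].
Proof. by rewrite !(rev_cons, rev_cat) -!cats1 -!catA. Qed.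

Lemma sound_R_nil : semR [::].
Proof. by apply/semR_rev; apply: sound_D_nil. Qed.

Lemma sound_RR w1 w2 : semR w1 -> semR w2 -> semR (w1 ++ w2).
Proof.
by move=> /semR_rev H1 /semR_rev H2; apply/semR_rev; rewrite rev_cat; apply: sound_DD.
Qed.

Lemma sound_R_relator w1 w2 w3 : semR w1 -> semQ w2 -> semR w3 ->
  semR (Some gc :: w1 ++ w2 ++ w3 ++ [:: Some ga]).
Proof.
move=> /semR_rev H1 /semQ_rev H2 /semR_rev H3; apply/semR_rev.
by rewrite rev_frame; apply: sound_D_relator.
Qed.

Lemma sound_Q_base w1 w2 w3 : semR w1 -> semR w2 -> semR w3 ->
  semQ (Some gb :: w1 ++ Some ga :: w2 ++ Some gc :: w3 ++ [:: Some gb]).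
Proof.
move=> /semR_rev H1 /semR_rev H2 /semR_rev H3; apply/semQ_rev.
have -> : rev (Some gb :: w1 ++ Some ga :: w2 ++ Some gc :: w3 ++ [:: Some gb]) =
  Some gb :: rev w3 ++ Some gc :: rev w2 ++ Some ga :: rev w1 ++ [:: Some gb].
  by rewrite !(rev_cons, rev_cat) -!cats1 -!catA.
exact: sound_K_base.
Qed.

Lemma sound_Q_step w1 w2 w3 : semR w1 -> semQ w2 -> semR w3 ->
  semQ (Some gb :: w1 ++ w2 ++ w3 ++ [:: Some gb]).
Proof.
move=> /semR_rev H1 /semQ_rev H2 /semR_rev H3; apply/semQ_rev.
by rewrite rev_frame; apply: sound_K_step.
Qed.

Lemma prods_sound X rhs w :
  (X, rhs) \in prods -> @sem_form _ Pi2_grammar sem rhs w -> sem X w.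
Proof.
rewrite !inE => Hp.
repeat (case/orP: Hp => [/eqP[-> ->] | Hp]); last move/eqP: Hp => [-> ->].
all: move=> /= H; repeat match goal with
  | H : ex _ |- _ => destruct H | H : ex2 _ _ |- _ => destruct H
  | H : and3 _ _ _ |- _ => destruct H end; subst; rewrite ?cats0.
all: eauto using sound_S, sound_S_hash, sound_D_nil, sound_DD, sound_D_relator,
  sound_K_base, sound_K_step, sound_R_nil, sound_RR, sound_R_relator,
  sound_Q_base, sound_Q_step.
Qed.

Local Notation der := (derives Pi2_grammar).
Local Notation produce rhs := (@derives_prod _ Pi2_grammar _ rhs).

(* Words derivable from D whose reversal is derivable from R (by soundness
   these are words equal to 1). *)
Definition dword (e : seq gen3) :=
  der [:: D] (map Some e) /\ der [:: R] (map Some (rev e)).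

Definition kword (k : seq gen3) :=
  der [:: K] (map Some k) /\ der [:: Q] (map Some (rev k)).

Lemma dword_nil : dword [::].
Proof. by split; apply: (produce [::]) => //; apply: der_nil. Qed.

Lemma dword_cat e1 e2 : dword e1 -> dword e2 -> dword (e1 ++ e2).
Proof.
move=> [H1 H1'] [H2 H2']; split.
- apply: (produce [:: D; D]) => //.
  rewrite map_cat -[map _ e2]cats0.
  exact: derives_cons_nt H1 (derives_cons_nt H2 (der_nil _ _)).
- apply: (produce [:: R; R]) => //.
  rewrite rev_cat map_cat -[map _ (rev e1)]cats0.
  exact: derives_cons_nt H2' (derives_cons_nt H1' (der_nil _ _)).
Qed.

Lemma dword_relator e1 k e2 : dword e1 -> kword k -> dword e2 ->
  dword (ga :: e1 ++ k ++ e2 ++ [:: gc]).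
Proof.
move=> [H1 H1'] [Hk Hk'] [H2 H2']; split.
- apply: (produce [:: tm ga; D; K; D; tm gc]) => //.
  rewrite /= !map_cat /=; apply: derives_cons_t.
  exact: derives_cons_nt H1 (derives_cons_nt Hk (derives_cons_nt H2
    (derives_cons_t _ (der_nil _ _)))).
- apply: (produce [:: tm gc; R; Q; R; tm ga]) => //.
  rewrite rev_frame /= !map_cat /=; apply: derives_cons_t.
  exact: derives_cons_nt H2' (derives_cons_nt Hk' (derives_cons_nt H1'
    (derives_cons_t _ (der_nil _ _)))).
Qed.

Lemma kword_base e1 e2 e3 : dword e1 -> dword e2 -> dword e3 ->
  kword (gb :: e1 ++ gc :: e2 ++ ga :: e3 ++ [:: gb]).
Proof.
move=> [H1 H1'] [H2 H2'] [H3 H3']; split.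
- apply: (produce [:: tm gb; D; tm gc; D; tm ga; D; tm gb]) => //.
  rewrite /= !(map_cat, map_cons) /=; apply: derives_cons_t.
  exact: derives_cons_nt H1 (derives_cons_t _ (derives_cons_nt H2
    (derives_cons_t _ (derives_cons_nt H3 (derives_cons_t _ (der_nil _ _)))))).
- apply: (produce [:: tm gb; R; tm ga; R; tm gc; R; tm gb]) => //.
  have -> : rev (gb :: e1 ++ gc :: e2 ++ ga :: e3 ++ [:: gb]) =
            gb :: rev e3 ++ ga :: rev e2 ++ gc :: rev e1 ++ [:: gb].
    by rewrite !(rev_cons, rev_cat) -!cats1 -!catA.
  rewrite /= !(map_cat, map_cons) /=; apply: derives_cons_t.
  exact: derives_cons_nt H3' (derives_cons_t _ (derives_cons_nt H2'
    (derives_cons_t _ (derives_cons_nt H1' (derives_cons_t _ (der_nil _ _)))))).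
Qed.

Lemma kword_step e1 k e2 : dword e1 -> kword k -> dword e2 ->
  kword (gb :: e1 ++ k ++ e2 ++ [:: gb]).
Proof.
move=> [H1 H1'] [Hk Hk'] [H2 H2']; split.
- apply: (produce [:: tm gb; D; K; D; tm gb]) => //.
  rewrite /= !map_cat /=; apply: derives_cons_t.
  exact: derives_cons_nt H1 (derives_cons_nt Hk (derives_cons_nt H2
    (derives_cons_t _ (der_nil _ _)))).
- apply: (produce [:: tm gb; R; Q; R; tm gb]) => //.
  rewrite rev_frame /= !map_cat /=; apply: derives_cons_t.
  exact: derives_cons_nt H2' (derives_cons_nt Hk' (derives_cons_nt H1'
    (derives_cons_t _ (der_nil _ _)))).
Qed.

Inductive padded : seq gen3 -> seq gen3 -> Prop :=
| pad_nil e : dword e -> padded e [::]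
| pad_cons e x u w : dword e -> padded u w -> padded (e ++ x :: u) (x :: w).

Lemma padded_nil_inv u : padded u [::] -> dword u.
Proof. by move=> H; inversion H. Qed.

Lemma padded_cons_inv u x w : padded u (x :: w) ->
  exists e u', [/\ u = e ++ x :: u', dword e & padded u' w].
Proof. by move=> H; inversion H; subst; exists e, u0. Qed.

Lemma padded_cat_inv u w1 w2 : padded u (w1 ++ w2) ->
  exists u1 u2, [/\ u = u1 ++ u2, padded u1 w1 & padded u2 w2].
Proof.
elim: w1 u => [|x w1 IH] u /=.
- by move=> H; exists [::], u; split => //; apply: pad_nil dword_nil.
- case/padded_cons_inv => e [u' [-> He /IH [u1 [u2 [-> H1 H2]]]]].
  by exists (e ++ x :: u1), u2; split; [rewrite -catA | apply: pad_cons | ].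
Qed.

Lemma padded_cat_dword u w e : padded u w -> dword e -> padded (u ++ e) w.
Proof.
elim=> [e0 H0|e0 x u0 w0 H0 _ IH] He.
- by apply: pad_nil; apply: dword_cat.
- by rewrite -catA /=; apply: pad_cons => //; apply: IH.
Qed.

Lemma padded_rcons u w x e : padded u w -> dword e -> padded (u ++ x :: e) (rcons w x).
Proof.
elim=> [e0 H0|e0 y u0 w0 H0 _ IH] He.
- by apply: pad_cons => //; apply: pad_nil.
- by rewrite -catA /=; apply: pad_cons => //; apply: IH.
Qed.

Lemma padded_bca i u : 0 < i -> padded u (bca i) ->
  exists e1 k e2, [/\ u = e1 ++ k ++ e2, dword e1, kword k & dword e2].
Proof.
elim: i u => // -[|i] IH u _.
- case/padded_cons_inv => e1 [u1 [-> H1]].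
  case/padded_cons_inv => e2 [u2 [-> H2]].
  case/padded_cons_inv => e3 [u3 [-> H3]].
  case/padded_cons_inv => e4 [u4 [-> H4 /padded_nil_inv H5]].
  exists e1, (gb :: e2 ++ gc :: e3 ++ ga :: e4 ++ [:: gb]), u4; split => //.
  + by do 4 rewrite /= -?catA.
  + exact: kword_base.
- rewrite -bca_succ; case/padded_cons_inv => e1 [u1 [-> H1]].
  case/padded_cat_inv => v1 [v2 [-> /(IH _ isT) [e' [k [e'' [-> H' Hk H'']]]]]].
  case/padded_cons_inv => f [g [-> Hf /padded_nil_inv Hg]].
  exists e1, (gb :: e' ++ k ++ (e'' ++ f) ++ [:: gb]), g; split => //.
  + by do 4 rewrite /= -?catA.
  + by apply: kword_step => //; apply: dword_cat.
Qed.

Lemma padded_relator i u : 0 < i -> padded u (ga :: bca i) -> dword (u ++ [:: gc]).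
Proof.
move=> Hi /padded_cons_inv [e0 [u' [-> H0 /(padded_bca Hi) [e1 [k [e2 [-> H1 Hk H2]]]]]]].
rewrite -catA /= -!catA; apply: dword_cat H0 _.
exact: dword_relator.
Qed.

Lemma padded_nf u : padded u (rev (nf u)).
Proof.
elim/last_ind: u => [|u x IH]; first exact: pad_nil dword_nil.
rewrite /nf foldl_rcons -/(nf u) {1}/push.
case E: (pop_redex (x :: nf u)) => [r|].
- case: (pop_redexP E) => i Hi [Ex En].
  have Er : rev (nf u) = rev r ++ ga :: bca i.
    by rewrite En /bca !(rev_cons, rev_cat) rev_nseq -!cats1 -!catA.
  move: IH; rewrite Er => /padded_cat_inv [u1 [u2 [-> H1 H2]]].
  by rewrite Ex -cats1 -catA; apply: padded_cat_dword H1 (padded_relator Hi H2).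
- by rewrite rev_cons -cats1; apply: padded_rcons IH dword_nil.
Qed.

(* Two paddings of the same skeleton w are matched by S: the skeleton
   letters are generated in pairs around the central #. *)
Lemma derives_S u v w : padded u w -> padded v w ->
  der [:: S] (map Some u ++ None :: map Some (rev v)).
Proof.
move=> H; elim: H v => [e [He _]|e x u0 w0 [He _] _ IH] v.
- move/padded_nil_inv => [_ Hv].
  apply: (produce [:: D; hash; R]) => //.
  rewrite -[map _ (rev v)]cats0.
  exact: derives_cons_nt He (derives_cons_t _ (derives_cons_nt Hv (der_nil _ _))).
- case/padded_cons_inv => f [v' [-> [_ Hf] Hv']].
  apply: (produce [:: D; tm x; S; tm x; R]); first by case: x.
  have -> : map Some (e ++ x :: u0) ++ None :: map Some (rev (f ++ x :: v')) =
      map Some e ++ Some x :: (map Some u0 ++ None :: map Some (rev v')) ++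
      Some x :: map Some (rev f) ++ [::].
    by rewrite cats0 rev_cat rev_cons -cats1 !map_cat /= -!catA.
  exact: derives_cons_nt He (derives_cons_t _ (derives_cons_nt (IH v' Hv')
    (derives_cons_t _ (derives_cons_nt Hf (der_nil _ _))))).
Qed.

Theorem mainTheorem3 : context_free (word_problem Pi2_rel).
Proof.
exists Pi2_grammar => w; split.
- exact: (@cfg_lang_sound _ Pi2_grammar sem prods_sound).
- case=> u [v [-> Huv]].
  apply: derives_S (padded_nf u) _.
  by rewrite (nf_eqPi Huv); apply: padded_nf.
Qed.
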